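(* For any function $g=g(\mathbf{x}_p)\in C^1(\mathbb{R}^{p+1},\mathbb{A})$ (depending only on $\mathbf{x}_p$) and any $k\in\mathbb{N}$: $$D_{\mathbf{x}_p}(\underline{\mathbf{x}}_q^{2k}g)=\underline{\mathbf{x}}_q^{2k}(D_{\mathbf{x}_p}g),\qquad D_{\mathbf{x}_p}(\underline{\mathbf{x}}_q^{2k+1}g)=\underline{\mathbf{x}}_q^{2k+1}(\overline{D}_{\mathbf{x}_p}g),$$ $$D_{\underline{\mathbf{x}}_q}(\underline{\mathbf{x}}_q^{2k}g)=-2k\,\underline{\mathbf{x}}_q^{2k-1}g,\qquad D_{\underline{\mathbf{x}}_q}(\underline{\mathbf{x}}_q^{2k+1}g)=-(2k+q)\,\underline{\mathbf{x}}_q^{2k}g.$$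
   Context: Let $\mathbb{A}$ be a real alternative algebra (the associator $[a,b,c]=(ab)c-a(bc)$ is an alternating trilinear function) with unity $1$, of finite real dimension $d>1$, equipped with an anti-involution $a\mapsto a^c$ (real linear, $a^c=a$ for real $a$, $(a^c)^c=a$, $(ab)^c=b^ca^c$). Let $t(x)=x+x^c$, $n(x)=xx^c$, $\mathbb{S}_{\mathbb{A}}=\{x: t(x)=0,\ n(x)=1\}$ (assumed nonempty) and $Q_{\mathbb{A}}=\mathbb{R}\cup\{x: t(x)\in\mathbb{R},\ n(x)\in\mathbb{R},\ 4n(x)>t(x)^2\}$. Let $M$ be a real subspace with $\mathbb{R}\subsetneq M\subseteq Q_{\mathbb{A}}$ having a basis $(v_0,\dots,v_m)$, $m\ge1$, $v_0=1$, $v_s\in\mathbb{S}_{\mathbb{A}}$, $v_sv_t=-v_tv_s$ for distinct $s,t\ge1$. Identify $x=\sum x_sv_s\in M$ with $(x_0,\dots,x_m)\in\mathbb{R}^{m+1}$; differentiate componentwise. Fix $p\in\{0,\dots,m-1\}$, $q=m-p$; $\mathbf{x}=\mathbf{x}_p+\underline{\mathbf{x}}_q$ with $\mathbf{x}_p=\sum_{s=0}^px_sv_s\in\mathbb{R}^{p+1}$, $\underline{\mathbf{x}}_q=\sum_{s=p+1}^m x_sv_s$; powers $\underline{\mathbf{x}}_q^j$ are taken in $\mathbb{A}$ (the term with $k=0$ in the third identity is $0$). $D_{\mathbf{x}_p}f=\sum_{s=0}^p v_s\partial_{x_s}f$, $\overline{D}_{\mathbf{x}_p}f=\partial_{x_0}f-\sum_{s=1}^pv_s\partial_{x_s}f$,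 $D_{\underline{\mathbf{x}}_q}f=\sum_{s=p+1}^mv_s\partial_{x_s}f$ (all acting on the left). *)

From mathcomp Require Import all_boot all_order all_algebra.
From mathcomp Require Import all_classical all_reals all_analysis.
Import GRing.Theory Num.Theory numFieldNormedType.Exports.
Set Implicit Arguments. Unset Strict Implicit. Unset Printing Implicit Defensive.
Local Open Scope ring_scope.

(* The algebra A of real dimension d is represented in coordinates as 'rV[R]_d
   (so it carries its natural normed-space structure for differentiation);
   mulA is the (non-associative) product, e the unity, conj the anti-involution. *)
Section AltAlg.
Context {R : realType} {d : nat}.
Local Notation A := 'rV[R]_d.
Variables (mulA : A -> A -> A) (e : A) (conj : A -> A).

Definition associator (a b c : A) : A := mulA (mulA a b) c - mulA a (mulA b c).

Record is_alt_alg_with_anti_involution : Prop := {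
  mulA_linear_l : forall (c : A) (r : R) (a b : A),
      mulA (r *: a + b) c = r *: mulA a c + mulA b c;
  mulA_linear_r : forall (a : A) (r : R) (b c : A),
      mulA a (r *: b + c) = r *: mulA a b + mulA a c;
  mul1A : forall a, mulA e a = a;
  mulA1 : forall a, mulA a e = a;
  associator_aab : forall a b, associator a a b = 0;
  associator_aba : forall a b, associator a b a = 0;
  associator_abb : forall a b, associator a b b = 0;
  conj_linear : forall (r : R) (a b : A), conj (r *: a + b) = r *: conj a + conj b;
  conj_real : forall r : R, conj (r *: e) = r *: e;
  conjK : forall a, conj (conj a) = a;
  conj_mul : forall a b, conj (mulA a b) = mulA (conj b) (conj a) }.

Definition is_realA (x : A) : Prop := exists r : R, x = r *: e.
Definition tA (x : A) : A := x + conj x.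
Definition nA (x : A) : A := mulA x (conj x).
Definition in_SA (x : A) : Prop := tA x = 0 /\ nA x = e.
Definition in_QA (x : A) : Prop :=
  is_realA x \/
  exists t n : R, tA x = t *: e /\ nA x = n *: e /\ t ^+ 2 < 4 * n.

(* powers: x^0 = 1, x^(j+1) = x x^j (A is power-associative) *)
Definition powA (x : A) (j : nat) : A := iter j (mulA x) e.

(* (v_0,...,v_m) is a basis of a real subspace M with R ⊊ M ⊆ Q_A,
   v_0 = 1, v_s ∈ S_A and v_s v_t = - v_t v_s for distinct s,t >= 1;
   M is the span of the v_s. *)
Record adapted_basis (m : nat) (v : 'I_m.+1 -> A) : Prop := {
  basis_v0 : v ord0 = e;
  basis_free : forall c : 'rV[R]_m.+1,
      \sum_(s < m.+1) c ord0 s *: v s = 0 -> c = 0;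
  basis_in_QA : forall c : 'rV[R]_m.+1, in_QA (\sum_(s < m.+1) c ord0 s *: v s);
  basis_in_SA : forall s : 'I_m.+1, (0 < s)%N -> in_SA (v s);
  basis_anticomm : forall s t : 'I_m.+1, (0 < s)%N -> (0 < t)%N -> s != t ->
      mulA (v s) (v t) = - mulA (v t) (v s) }.

Definition partial (n : nat) (F : 'rV[R]_n -> A) (s : 'I_n) (x : 'rV[R]_n) : A :=
  'D_(delta_mx ord0 s) F x.

Definition C1 (n : nat) (F : 'rV[R]_n -> A) : Prop :=
  (forall (s : 'I_n) (x : 'rV[R]_n), derivable F x (delta_mx ord0 s)) /\
  (forall s : 'I_n, continuous (partial F s)).

Variables (m p : nat) (v : 'I_m.+1 -> A).

Definition xp_of (x : 'rV[R]_m.+1) : 'rV[R]_p.+1 := \row_(i < p.+1) x ord0 (inord i).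
Definition xq_of (x : 'rV[R]_m.+1) : A := \sum_(s < m.+1 | (p < s)%N) x ord0 s *: v s.

Definition D_xp (F : 'rV[R]_m.+1 -> A) (x : 'rV[R]_m.+1) : A :=
  \sum_(s < m.+1 | (s <= p)%N) mulA (v s) (partial F s x).
Definition D_xq (F : 'rV[R]_m.+1 -> A) (x : 'rV[R]_m.+1) : A :=
  \sum_(s < m.+1 | (p < s)%N) mulA (v s) (partial F s x).

Definition D_xp_g (g : 'rV[R]_p.+1 -> A) (y : 'rV[R]_p.+1) : A :=
  \sum_(s < p.+1) mulA (v (inord s)) (partial g s y).
Definition Dbar_xp_g (g : 'rV[R]_p.+1 -> A) (y : 'rV[R]_p.+1) : A :=
  partial g ord0 y - \sum_(s < p.+1 | (0 < s)%N) mulA (v (inord s)) (partial g s y).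

End AltAlg.

From mathcomp Require Import all_boot all_order all_algebra.
From mathcomp Require Import all_classical all_reals all_analysis.
From mathcomp Require Import ring.
Import GRing.Theory Num.Theory numFieldNormedType.Exports.
Local Open Scope ring_scope.

(* Because the v_s (s >= 1) square to -1 and pairwise
   anticommute, the left alternative law turns these relations into relations between
   left multiplications, v_s (v_s w) = -w and v_s (v_t w) = -v_t (v_s w).  Hence
   xq (xq w) = c w with c = -sum_{s>p} x_s^2, so xq^(2k) = c^k and xq^(2k+1) = c^k xq,
   and v_s (xq w) = -xq (v_s w) for 1 <= s <= p.  The four identities then follow from
   the product rule: D_xp only differentiates g, and in odd degree moving v_s (s >= 1)
   past xq costs a sign, which turns D_xp into Dbar_xp; D_xq differentiates c^k, giving
   the factor 2k, and in odd degree also xq, giving sum_{s>p} v_s (v_s w) = -q w. *)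

Definition xq_sqr {R : realType} {m : nat} (p : nat) (x : 'rV[R]_m.+1) : R :=
  - \sum_(t < m.+1 | (p < t)%N) x ord0 t ^+ 2.

Lemma sum_ord_leq_inord (V : nmodType) m p (F : 'I_m.+1 -> V) : (p <= m)%N ->
  \sum_(s < m.+1 | (s <= p)%N) F s = \sum_(i < p.+1) F (inord i).
Proof.
move=> pm; rewrite (big_ord_narrow_leq pm); apply: eq_bigr => i _; congr F.
by apply: val_inj; rewrite /= inordK // ltnS (leq_trans _ pm) // -ltnS.
Qed.

Lemma sum_ord_gt_const (V : nmodType) m p (a : V) :
  \sum_(s < m.+1 | (p < s)%N) a = a *+ (m - p).
Proof. by rewrite -(big_geq_mkord p.+1 m.+1 xpredT (fun=> a)) sumr_const_nat subSS. Qed.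

Lemma sum_offdiag_antisym {R : numFieldType} (V : lmodType R) (I : finType) (P : pred I)
    (F : I -> I -> V) :
  (forall s t, P s -> P t -> s != t -> F s t = - F t s) ->
  \sum_(s | P s) \sum_(t | P t && (t != s)) F s t = 0.
Proof.
move=> Fanti; set S := (X in X = 0).
have : S = - S.
  rewrite {1}/S (exchange_big_dep P) /= => [|s t _ /andP[-> //]].
  rewrite /S -sumrN; apply: eq_bigr => t Pt; rewrite -sumrN.
  apply: eq_big => [s | s /and3P[Ps _ ts]]; first by rewrite Pt eq_sym.
  by rewrite Fanti // eq_sym.
move/eqP; rewrite -addr_eq0 -mulr2n -scaler_nat scaler_eq0 pnatr_eq0 /=.
by move/eqP.
Qed.

Section DirectionalDerivative.
Context {R : realType} {V : normedModType R}.

Lemma is_derive_mxP a b (G : V -> 'M[R]_(a, b)) (x w : V) (dG : 'M[R]_(a, b)) :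
  is_derive x w G dG <-> forall i j, is_derive x w (fun y => G y i j) (dG i j).
Proof.
split=> [HG i j | HG].
- have /derivable_mxP Gij : derivable G x w by [].
  split; first exact: Gij.
  by rewrite -(derive_val (is_derive := HG)) derive_mx // mxE.
- have Gw : derivable G x w by apply/derivable_mxP.
  split=> //; apply/matrixP => i j; rewrite derive_mx // mxE.
  exact: derive_val.
Qed.

Lemma is_derive_scale {a b} {phi : V -> R} {G : V -> 'M[R]_(a, b)} {x w : V}
    {dphi : R} {dG : 'M[R]_(a, b)} :
  is_derive x w phi dphi -> is_derive x w G dG ->
  is_derive x w (fun y => phi y *: G y) (phi x *: dG + dphi *: G x).
Proof.
move=> dphi_x /is_derive_mxP dG_x; apply/is_derive_mxP => i j.
have -> : (fun y => (phi y *: G y) i j) = (phi * (fun y => G y i j))%R.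
  by apply/funext => y; rewrite mxE.
by rewrite !mxE; apply: is_derive_eq; rewrite /= [dphi * _]mulrC.
Qed.

Lemma is_derive_exprZ {a b} {phi : V -> R} {G : V -> 'M[R]_(a, b)} {x w : V}
    {dphi : R} {dG : 'M[R]_(a, b)} k :
  is_derive x w phi dphi -> is_derive x w G dG ->
  is_derive x w (fun y => phi y ^+ k *: G y)
    (phi x ^+ k *: dG + (k%:R * phi x ^+ k.-1 * dphi) *: G x).
Proof.
move=> dphi_x dG_x; have := is_derive_scale (is_deriveX k dphi_x) dG_x.
by rewrite exprfctE.
Qed.

Lemma is_derive_sum_cond {W : normedModType R} {n} (P : pred 'I_n)
    {f : 'I_n -> V -> W} {x w : V} {df : 'I_n -> W} :
  (forall i, P i -> is_derive x w (f i) (df i)) ->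
  is_derive x w (fun y => \sum_(i < n | P i) f i y) (\sum_(i < n | P i) df i).
Proof.
move=> df_x; rewrite -fct_sumE.
elim/big_ind2 : _ => //; first exact: is_derive_cst.
by move=> f1 d1 f2 d2 ? ?; exact: is_deriveD.
Qed.

Lemma is_derive_line_eq {V' W : normedModType R} {f : V -> W} {f' : V' -> W}
    {x w : V} {x' w' : V'} {df : W} :
  (forall h : R, f (h *: w + x) = f' (h *: w' + x')) ->
  is_derive x' w' f' df -> is_derive x w f df.
Proof.
move=> ff' df_x'.
have fx : f x = f' x' by have := ff' 0; rewrite !scale0r !add0r.
have quotE : (fun h : R => h^-1 *: ((f \o shift x) (h *: w) - f x)) =
             (fun h : R => h^-1 *: ((f' \o shift x') (h *: w') - f' x')).
  by apply/funext => h /=; rewrite ff' fx.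
split; first by have : derivable f' x' w' by []; rewrite /derivable quotE.
by have := derive_val (is_derive := df_x'); rewrite /derive quotE.
Qed.

End DirectionalDerivative.

Lemma is_derive_row_coord {R : realType} {n} (x w : 'rV[R]_n) (t : 'I_n) :
  is_derive x w (fun y : 'rV[R]_n => y ord0 t) (w ord0 t).
Proof. by have /is_derive_mxP := is_derive_id x w; apply. Qed.

Lemma sum_delta_scale {R : ringType} {V : lmodType R} {n} (P : pred 'I_n) (s : 'I_n)
    (c : 'I_n -> V) :
  \sum_(t < n | P t) ('e_s : 'rV[R]_n) ord0 t *: c t = if P s then c s else 0.
Proof.
under eq_bigr do rewrite mxE eqxx /=.
case: ifP => Ps.
  rewrite (bigD1 s) //= eqxx scale1r big1 ?addr0 // => t /andP[_ /negbTE ->].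
  by rewrite scale0r.
rewrite big1 // => t Pt; case: eqP => [ts | _]; last by rewrite scale0r.
by move: Ps; rewrite -ts Pt.
Qed.

Section AlternativeAlgebra.
Context {R : realType} {d : nat}.
Local Notation A := 'rV[R]_d.
Context {mulA : A -> A -> A}.
Hypothesis linear_mulAl : forall c, linear (mulA^~ c).
Hypothesis linear_mulAr : forall a, linear (mulA a).

Lemma mulADl a b c : mulA (a + b) c = mulA a c + mulA b c.
Proof. by have := linear_mulAl c 1 a b; rewrite !scale1r. Qed.

Lemma mulADr a b c : mulA a (b + c) = mulA a b + mulA a c.
Proof. by have := linear_mulAr a 1 b c; rewrite !scale1r. Qed.

Lemma mul0A c : mulA 0 c = 0.
Proof. by have := mulADl 0 0 c; rewrite addr0 -{1}[mulA 0 c]addr0 => /addrI <-. Qed.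

Lemma mulA0 a : mulA a 0 = 0.
Proof. by have := mulADr a 0 0; rewrite addr0 -{1}[mulA a 0]addr0 => /addrI <-. Qed.

Lemma mulAZl r a c : mulA (r *: a) c = r *: mulA a c.
Proof. by have := linear_mulAl c r a 0; rewrite !addr0 mul0A addr0. Qed.

Lemma mulAZr r a c : mulA a (r *: c) = r *: mulA a c.
Proof. by have := linear_mulAr a r c 0; rewrite !addr0 mulA0 addr0. Qed.

Lemma mulNA a c : mulA (- a) c = - mulA a c.
Proof. by rewrite -scaleN1r mulAZl scaleN1r. Qed.

Lemma mulAN a c : mulA a (- c) = - mulA a c.
Proof. by rewrite -scaleN1r mulAZr scaleN1r. Qed.

Lemma mulA_suml I (r : seq I) (P : pred I) (F : I -> A) c :
  mulA (\sum_(i <- r | P i) F i) c = \sum_(i <- r | P i) mulA (F i) c.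
Proof. exact: (big_morph _ (fun a b => mulADl a b c) (mul0A c)). Qed.

Lemma mulA_sumr I (r : seq I) (P : pred I) (F : I -> A) a :
  mulA a (\sum_(i <- r | P i) F i) = \sum_(i <- r | P i) mulA a (F i).
Proof. exact: (big_morph _ (mulADr a) (mulA0 a)). Qed.

Lemma mulA_coordE a b :
  mulA a b = \sum_(i < d) \sum_(j < d) (a ord0 i * b ord0 j) *: mulA 'e_i 'e_j.
Proof.
rewrite {1}(row_sum_delta a) {1}(row_sum_delta b) mulA_suml; apply: eq_bigr => i _.
rewrite mulAZl mulA_sumr scaler_sumr; apply: eq_bigr => j _.
by rewrite mulAZr scalerA.
Qed.

Lemma is_derive_mulA {V : normedModType R} {G1 G2 : V -> A} {x w : V} {dG1 dG2 : A} :
  is_derive x w G1 dG1 -> is_derive x w G2 dG2 ->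
  is_derive x w (fun y => mulA (G1 y) (G2 y)) (mulA dG1 (G2 x) + mulA (G1 x) dG2).
Proof.
move=> /is_derive_mxP dG1_x /is_derive_mxP dG2_x.
rewrite (funext (fun y => mulA_coordE (G1 y) (G2 y))) !mulA_coordE -big_split /=.
apply: is_derive_sum_cond => i _; rewrite -big_split /=.
apply: is_derive_sum_cond => j _.
apply: is_derive_eq.
  exact: is_derive_scale (is_deriveM (dG1_x ord0 i) (dG2_x ord0 j)) (is_derive_cst _ _ _).
by rewrite scaler0 add0r -scalerDl addrC [_ *: dG1 _ _]mulrC.
Qed.

Lemma lmul_sum_sqr (I : finType) (P : pred I) (u : I -> A) (c : I -> R) w :
  (forall s, P s -> mulA (u s) (mulA (u s) w) = - w) ->
  (forall s t, P s -> P t -> s != t ->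
     mulA (u s) (mulA (u t) w) = - mulA (u t) (mulA (u s) w)) ->
  mulA (\sum_(s | P s) c s *: u s) (mulA (\sum_(s | P s) c s *: u s) w)
    = - (\sum_(s | P s) c s ^+ 2) *: w.
Proof.
move=> u_sqr u_anti.
rewrite [in mulA _ w]mulA_suml mulA_suml.
under eq_bigr => s Ps do rewrite mulAZl mulA_sumr scaler_sumr (bigD1 s) //=.
rewrite big_split /= sum_offdiag_antisym ?addr0 => [|s t Ps Pt st].
  rewrite scaleNr scaler_suml -sumrN; apply: eq_bigr => s Ps.
  by rewrite mulAZl mulAZr u_sqr // scalerA scalerN expr2.
by rewrite !mulAZl !mulAZr u_anti // !scalerN !scalerA mulrC.
Qed.

Hypothesis left_alternative : forall a b, associator mulA a a b = 0.

Lemma associatorDl a b c w :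
  associator mulA (a + b) c w = associator mulA a c w + associator mulA b c w.
Proof. by rewrite /associator !mulADl opprD addrACA. Qed.

Lemma associatorDr a b c w :
  associator mulA c (a + b) w = associator mulA c a w + associator mulA c b w.
Proof. by rewrite /associator !mulADl !mulADr !mulADl opprD addrACA. Qed.

Lemma associator_swap a b w : associator mulA a b w = - associator mulA b a w.
Proof.
have := left_alternative (a + b) w.
rewrite associatorDl !associatorDr !left_alternative add0r addr0.
by move/eqP; rewrite addr_eq0 => /eqP.
Qed.

Lemma lmul_anticomm a b w :
  mulA a b = - mulA b a -> mulA a (mulA b w) = - mulA b (mulA a w).
Proof.
move=> ab; have := associator_swap a b w.
rewrite /associator ab mulNA => /eqP.
by rewrite -subr_eq0 opprK addrACA addNr add0r -opprD oppr_eq0 addr_eq0 => /eqP.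
Qed.

Lemma lmul_anticomm_sum (I : finType) (P : pred I) (u : I -> A) (c : I -> R) a w :
  (forall t, P t -> mulA a (u t) = - mulA (u t) a) ->
  mulA a (mulA (\sum_(t | P t) c t *: u t) w)
    = - mulA (\sum_(t | P t) c t *: u t) (mulA a w).
Proof.
move=> a_anti; rewrite !mulA_suml mulA_sumr -sumrN; apply: eq_bigr => t Pt.
by rewrite !mulAZl mulAZr lmul_anticomm ?a_anti // scalerN.
Qed.

Context {e : A}.

Lemma in_SA_sqr (conj : A -> A) a : in_SA mulA e conj a -> mulA a a = - e.
Proof.
rewrite /in_SA /tA /nA => -[/eqP]; rewrite addrC addr_eq0 => /eqP ->.
by rewrite mulAN => <-; rewrite opprK.
Qed.

Hypothesis mul1A : forall a, mulA e a = a.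
Hypothesis mulA1 : forall a, mulA a e = a.

Lemma lmul_sqrN1 a w : mulA a a = - e -> mulA a (mulA a w) = - w.
Proof.
move=> aa; have /eqP := left_alternative a w.
by rewrite /associator aa mulNA mul1A subr_eq0 => /eqP ->.
Qed.

Lemma powA_even z c k :
  (forall w, mulA z (mulA z w) = c *: w) -> powA mulA e z (2 * k) = c ^+ k *: e.
Proof.
move=> zz; elim: k => [|k IHk]; first by rewrite muln0 expr0 scale1r.
by rewrite mulnS /powA /= -/(powA mulA e z (2 * k)) zz IHk scalerA exprS.
Qed.

Lemma powA_odd z c k :
  (forall w, mulA z (mulA z w) = c *: w) -> powA mulA e z (2 * k).+1 = c ^+ k *: z.
Proof.
by move=> zz; rewrite /powA /= -/(powA mulA e z (2 * k)) (powA_even z c k zz) mulAZr mulA1.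
Qed.

Section AdaptedBasis.
Context {m p : nat} {v : 'I_m.+1 -> A}.
Hypothesis v0 : v ord0 = e.
Hypothesis v_sqr : forall s : 'I_m.+1, (0 < s)%N -> mulA (v s) (v s) = - e.
Hypothesis v_anticomm : forall s t : 'I_m.+1, (0 < s)%N -> (0 < t)%N -> s != t ->
  mulA (v s) (v t) = - mulA (v t) (v s).

Local Notation xq := (xq_of p v).

Lemma lmul_xq_xq x w : mulA (xq x) (mulA (xq x) w) = xq_sqr p x *: w.
Proof.
apply: lmul_sum_sqr => [s ps | s t ps pt st].
  exact/lmul_sqrN1/v_sqr/(leq_ltn_trans (leq0n p) ps).
by apply/lmul_anticomm/v_anticomm; rewrite // (leq_ltn_trans (leq0n p)).
Qed.

Lemma mulA_xq_l x w : mulA (xq x) w = \sum_(t < m.+1 | (p < t)%N) x ord0 t *: mulA (v t) w.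
Proof. by rewrite mulA_suml; apply: eq_bigr => t _; rewrite mulAZl. Qed.

Lemma powA_xq_even x k : powA mulA e (xq x) (2 * k) = xq_sqr p x ^+ k *: e.
Proof. exact/powA_even/lmul_xq_xq. Qed.

Lemma powA_xq_odd x k : powA mulA e (xq x) (2 * k).+1 = xq_sqr p x ^+ k *: xq x.
Proof. exact/powA_odd/lmul_xq_xq. Qed.

Lemma lmul_v_xq (s : 'I_m.+1) x w : (0 < s)%N -> (s <= p)%N ->
  mulA (v s) (mulA (xq x) w) = - mulA (xq x) (mulA (v s) w).
Proof.
move=> s0 sp; apply: lmul_anticomm_sum => t pt; apply: v_anticomm => //.
  exact: leq_ltn_trans (leq0n p) pt.
by apply: contraTneq pt => <-; rewrite -leqNgt.
Qed.

Section FunctionOfXp.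
Hypothesis p_le_m : (p <= m)%N.
Context {g : 'rV[R]_p.+1 -> A}.
Hypothesis g_derivable : forall (i : 'I_p.+1) (y : 'rV[R]_p.+1), derivable g y 'e_i.

Lemma inordK_le j : (j <= p)%N -> (inord j : 'I_m.+1) = j :> nat.
Proof. by move=> jp; rewrite inordK // ltnS (leq_trans jp). Qed.

Lemma xq_delta (s : 'I_m.+1) : xq 'e_s = if (p < s)%N then v s else 0.
Proof. exact: sum_delta_scale. Qed.

Lemma is_derive_xq x w : is_derive x w xq (xq w).
Proof.
rewrite /xq_of; apply: is_derive_sum_cond => t _; apply: is_derive_eq.
  exact: is_derive_scale (is_derive_row_coord x w t) (is_derive_cst (v t) x w).
by rewrite scaler0 add0r.
Qed.

Lemma is_derive_xq_sqr (x : 'rV[R]_m.+1) (s : 'I_m.+1) :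
  is_derive x 'e_s (xq_sqr p) (if (p < s)%N then - (2 * x ord0 s) else 0).
Proof.
have dsqr t : is_derive x 'e_s (fun y : 'rV[R]_m.+1 => y ord0 t ^+ 2)
                (('e_s : 'rV[R]_m.+1) ord0 t *: (2 * x ord0 t : R^o)).
  have := is_deriveX 2 (is_derive_row_coord x 'e_s t).
  by rewrite exprfctE expr1 => /is_derive_eq; apply; exact: mulrC.
have := is_deriveN (is_derive_sum_cond (fun t => (p < t)%N) (fun t _ => dsqr t)).
by rewrite opprfctE sum_delta_scale; case: ifP; rewrite ?oppr0.
Qed.

Lemma xp_of_shift_in (i : 'I_p.+1) (h : R) (x : 'rV[R]_m.+1) :
  xp_of p (h *: 'e_(inord i) + x) = h *: 'e_i + xp_of p x.
Proof.
apply/rowP => j; rewrite !mxE.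
by rewrite -[inord j == _]val_eqE /= !inordK_le ?leq_ord // val_eqE.
Qed.

Lemma xp_of_shift_out (s : 'I_m.+1) (h : R) (x : 'rV[R]_m.+1) :
  (p < s)%N -> xp_of p (h *: 'e_s + x) = xp_of p x.
Proof.
move=> ps; apply/rowP => j; rewrite !mxE.
have /negbTE -> : (inord j : 'I_m.+1) != s.
  by rewrite -val_eqE /= inordK_le ?leq_ord // neq_ltn (leq_trans (ltn_ord j) ps).
by rewrite andbF mulr0 add0r.
Qed.

Lemma is_derive_g_xp_in (i : 'I_p.+1) (x : 'rV[R]_m.+1) :
  is_derive x 'e_(inord i) (fun y => g (xp_of p y)) (partial g i (xp_of p x)).
Proof.
apply: (is_derive_line_eq (f' := g) (x' := xp_of p x) (w' := 'e_i)).
  by move=> h; rewrite xp_of_shift_in.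
exact: derivableP.
Qed.

Lemma is_derive_g_xp_out (s : 'I_m.+1) (x : 'rV[R]_m.+1) :
  (p < s)%N -> is_derive x 'e_s (fun y => g (xp_of p y)) 0.
Proof.
move=> ps; apply: (is_derive_line_eq (f' := cst (g (xp_of p x))) (x' := x) (w' := 'e_s)).
by move=> h; rewrite xp_of_shift_out.
Qed.

Local Notation powA_g j := (fun y => mulA (powA mulA e (xq_of p v y) j) (g (xp_of p y))).

Lemma powA_g_even k : powA_g (2 * k) = fun y => xq_sqr p y ^+ k *: g (xp_of p y).
Proof. by apply/funext => y; rewrite powA_xq_even mulAZl mul1A. Qed.

Lemma powA_g_odd k :
  powA_g (2 * k).+1 = fun y => xq_sqr p y ^+ k *: mulA (xq y) (g (xp_of p y)).
Proof. by apply/funext => y; rewrite powA_xq_odd mulAZl. Qed.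

Lemma partial_powA_g_even_in k (i : 'I_p.+1) x :
  partial (powA_g (2 * k)) (inord i) x = xq_sqr p x ^+ k *: partial g i (xp_of p x).
Proof.
have := is_derive_exprZ k (is_derive_xq_sqr x (inord i)) (is_derive_g_xp_in i x).
rewrite inordK_le ?leq_ord // ltnNge leq_ord /= mulr0 scale0r addr0 -powA_g_even => D.
by rewrite /partial derive_val.
Qed.

Lemma partial_powA_g_odd_in k (i : 'I_p.+1) x :
  partial (powA_g (2 * k).+1) (inord i) x
    = xq_sqr p x ^+ k *: mulA (xq x) (partial g i (xp_of p x)).
Proof.
have := is_derive_exprZ k (is_derive_xq_sqr x (inord i))
  (is_derive_mulA (is_derive_xq x 'e_(inord i)) (is_derive_g_xp_in i x)).
rewrite xq_delta inordK_le ?leq_ord // ltnNge leq_ord /= mul0A add0r mulr0 scale0r addr0.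
by rewrite -powA_g_odd => D; rewrite /partial derive_val.
Qed.

Lemma partial_powA_g_even_out k (s : 'I_m.+1) x : (p < s)%N ->
  partial (powA_g (2 * k)) s x
    = (- (2 * k)%:R * xq_sqr p x ^+ k.-1 * x ord0 s) *: g (xp_of p x).
Proof.
move=> ps; have := is_derive_exprZ k (is_derive_xq_sqr x s) (is_derive_g_xp_out s x ps).
rewrite ps scaler0 add0r -powA_g_even => D; rewrite /partial derive_val.
by congr (_ *: _); rewrite natrM; ring.
Qed.

Lemma partial_powA_g_odd_out k (s : 'I_m.+1) x : (p < s)%N ->
  partial (powA_g (2 * k).+1) s x
    = xq_sqr p x ^+ k *: mulA (v s) (g (xp_of p x))
      + (- (2 * k)%:R * xq_sqr p x ^+ k.-1 * x ord0 s) *: mulA (xq x) (g (xp_of p x)).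
Proof.
move=> ps; have := is_derive_exprZ k (is_derive_xq_sqr x s)
  (is_derive_mulA (is_derive_xq x 'e_s) (is_derive_g_xp_out s x ps)).
rewrite xq_delta ps mulA0 addr0 -powA_g_odd => D; rewrite /partial derive_val.
by congr (_ + _ *: _); rewrite natrM; ring.
Qed.

Lemma D_xp_powA_g_even k x :
  D_xp mulA p v (powA_g (2 * k)) x
    = mulA (powA mulA e (xq x) (2 * k)) (D_xp_g mulA v g (xp_of p x)).
Proof.
rewrite /D_xp sum_ord_leq_inord // powA_xq_even mulAZl mul1A /D_xp_g scaler_sumr.
by apply: eq_bigr => i _; rewrite partial_powA_g_even_in mulAZr.
Qed.

Lemma D_xp_powA_g_odd k x :
  D_xp mulA p v (powA_g (2 * k).+1) x
    = mulA (powA mulA e (xq x) (2 * k).+1) (Dbar_xp_g mulA v g (xp_of p x)).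
Proof.
rewrite /D_xp sum_ord_leq_inord //.
under eq_bigr do rewrite partial_powA_g_odd_in mulAZr.
rewrite -scaler_sumr powA_xq_odd mulAZl /Dbar_xp_g; congr (_ *: _).
rewrite mulADr mulAN mulA_sumr big_ord_recl [in RHS]big_mkcond big_ord_recl /=.
rewrite add0r -sumrN.
have -> : (inord 0 : 'I_m.+1) = ord0 by apply: val_inj; exact: inordK_le (leq0n p).
rewrite v0 mul1A; congr (_ + _); apply: eq_bigr => i _.
by rewrite lmul_v_xq // inordK_le // ltn_ord.
Qed.

Lemma D_xq_powA_g_even k x :
  D_xq mulA p v (powA_g (2 * k)) x
    = (- (2 * k)%:R) *: mulA (powA mulA e (xq x) (2 * k).-1) (g (xp_of p x)).
Proof.
rewrite /D_xq.
under eq_bigr => s ps do rewrite partial_powA_g_even_out // mulAZr -scalerA.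
rewrite -scaler_sumr -mulA_xq_l.
case: k => [|k]; first by rewrite muln0 oppr0 !mul0r !scale0r.
have -> : (2 * k.+1).-1 = (2 * k).+1 by rewrite mulnS.
by rewrite powA_xq_odd mulAZl scalerA.
Qed.

Lemma D_xq_powA_g_odd k x :
  D_xq mulA p v (powA_g (2 * k).+1) x
    = (- (2 * k + (m - p))%:R) *: mulA (powA mulA e (xq x) (2 * k)) (g (xp_of p x)).
Proof.
rewrite /D_xq.
under eq_bigr => s ps do rewrite partial_powA_g_odd_out // mulADr !mulAZr
  lmul_sqrN1 ?v_sqr ?(leq_ltn_trans (leq0n p)) // -scalerA.
rewrite big_split /= sum_ord_gt_const -scaler_sumr -mulA_xq_l lmul_xq_xq.
rewrite powA_xq_even mulAZl mul1A scalerN -scaleNr -scaler_nat !scalerA -scalerDl.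
congr (_ *: _); case: k => [|k]; first by rewrite muln0 add0n !expr0; ring.
by rewrite /= exprS natrD natrM; ring.
Qed.

End FunctionOfXp.
End AdaptedBasis.
End AlternativeAlgebra.

Theorem lemma3p8 (R : realType) (d m p : nat)
    (mulA : 'rV[R]_d -> 'rV[R]_d -> 'rV[R]_d) (e : 'rV[R]_d)
    (conj : 'rV[R]_d -> 'rV[R]_d) (v : 'I_m.+1 -> 'rV[R]_d)
    (g : 'rV[R]_p.+1 -> 'rV[R]_d) (k : nat) :
  (1 < d)%N ->
  is_alt_alg_with_anti_involution mulA e conj ->
  adapted_basis mulA e conj v ->
  (p < m)%N ->
  C1 g ->
  forall x : 'rV[R]_m.+1,
    [/\ D_xp mulA p v (fun y => mulA (powA mulA e (xq_of p v y) (2 * k)) (g (xp_of p y))) x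
          = mulA (powA mulA e (xq_of p v x) (2 * k)) (D_xp_g mulA v g (xp_of p x)),
        D_xp mulA p v (fun y => mulA (powA mulA e (xq_of p v y) (2 * k).+1) (g (xp_of p y))) x
          = mulA (powA mulA e (xq_of p v x) (2 * k).+1) (Dbar_xp_g mulA v g (xp_of p x)),
        D_xq mulA p v (fun y => mulA (powA mulA e (xq_of p v y) (2 * k)) (g (xp_of p y))) x
          = (- (2 * k)%:R) *: mulA (powA mulA e (xq_of p v x) (2 * k).-1) (g (xp_of p x))
      & D_xq mulA p v (fun y => mulA (powA mulA e (xq_of p v y) (2 * k).+1) (g (xp_of p y))) x
          = (- (2 * k + (m - p))%:R) *: mulA (powA mulA e (xq_of p v x) (2 * k)) (g (xp_of p x))].
Proof.
move=> _ alt basis /ltnW p_le_m [g_derivable _] x.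
have linear_mulAl : forall c, linear (mulA^~ c) := mulA_linear_l alt.
have linear_mulAr : forall a, linear (mulA a) := mulA_linear_r alt.
have left_alternative := associator_aab alt.
have [mul1A mulA1] := (mul1A alt, mulA1 alt).
have [v0 v_anticomm] := (basis_v0 basis, basis_anticomm basis).
have v_sqr (s : 'I_m.+1) : (0 < s)%N -> mulA (v s) (v s) = - e.
  by move=> s0; exact (in_SA_sqr linear_mulAr _ _ (basis_in_SA basis s0)).
split; by [apply: D_xp_powA_g_even | apply: D_xp_powA_g_odd
          | apply: D_xq_powA_g_even | apply: D_xq_powA_g_odd].
Qed.
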